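(* For every rational number $\ell > 1$ there exists an integer $N(\ell)$ such that for every integer $m > N(\ell)$ for which $\ell \cdot m$ is an integer, the complete bipartite graph $K_{m,\ell\cdot m}$ is not stable, i.e., its independence polynomial has a root $z$ with $\mathrm{Re}(z) > 0$.
   Context: For a simple graph $G$, the independence polynomial is $i(G,x)=\sum_{k=0}^{\alpha(G)} i_k(G)x^k$, where $i_k(G)$ is the number of independent sets of size $k$ in $G$ (with $i_0(G)=1$) and $\alpha(G)$ is the independence number. A graph $G$ is called stable if every root $z$ of $i(G,x)$ satisfies $\mathrm{Re}(z)\leq 0$. $K_{a,b}$ denotes the complete bipartite graph with parts of sizes $a$ and $b$; its independence polynomial is $(1+x)^a+(1+x)^b-1$. *)

From HB Require Import structures.
From mathcomp Require Import all_boot all_order all_algebra all_field.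
Set Implicit Arguments. Unset Strict Implicit. Unset Printing Implicit Defensive.
Import Order.TTheory GRing.Theory Num.Theory.
Local Open Scope ring_scope.

Definition simple_graph (T : finType) (e : rel T) : Prop :=
  symmetric e /\ irreflexive e.

Definition independent (T : finType) (e : rel T) (S : {set T}) : bool :=
  [forall x in S, forall y in S, ~~ e x y].

Definition indep_poly (T : finType) (e : rel T) : {poly algC} :=
  \sum_(S : {set T} | independent e S) 'X^#|S|.

Definition stable (T : finType) (e : rel T) : Prop :=
  forall z : algC, root (indep_poly e) z -> 'Re z <= 0.

Definition Kab_rel (a b : nat) : rel ('I_a + 'I_b)%type :=
  fun x y => match x, y with
             | inl _, inr _ => true
             | inr _, inl _ => true
             | _, _ => false
             end.
Arguments Kab_rel a b : clear implicits.

(* Write l = P/Q in lowest terms, so that m = Q t and k = P t. As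
   i(K_{a,b}, x) = (1 + x)^a + (1 + x)^b - 1, the point w - 1 is a root of
   i(K_{m,k}) as soon as u := w^t solves u^P + u^Q = 1, and it lies in the open
   right half-plane when Re w > 1.

   The trinomial f = X^P + X^Q - 1 has a root of modulus > 1: otherwise, the
   product of its roots having modulus |f(0)| = 1, all of them would lie on the
   unit circle, which makes f self-inversive: conj f(1) = conj f(0) f(1), that
   is 1 = -1.

   For |u| > 1 the t-th roots of u are |u|^(1/t) times the vertices z_j of a
   rotated regular t-gon. If Re z_j <= s for all j, test the Fejer polynomial F
   (coefficients 0, 1, ..., n, ..., 1) against the vertices: by orthogonality
   of the characters j |-> z_j^a, the inequality Re (sum_j z_j |F(z_j)|^2) <=
   s sum_j |F(z_j)|^2 reads T <= s S, where S = sum_a F_a^2 >= n^3/3 and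
   S - T <= t/2 for T = sum_a F_(a-1) F_a. Hence 1 - s = O(1/t^2), whereas
   s = |u|^(-1/t) satisfies 1 - s >= (1 - 1/|u|)/t. *)

From mathcomp Require Import all_boot all_order all_algebra all_field.
From mathcomp Require Import ring zify.
Import Order.TTheory GRing.Theory Num.Theory.
Set Implicit Arguments. Unset Strict Implicit. Unset Printing Implicit Defensive.
Local Open Scope ring_scope.

Lemma sum_subset_expr (R : comNzRingType) (T : finType) (A : {set T}) (x : R) :
  \sum_(S : {set T} | S \subset A) x ^+ #|S| = (1 + x) ^+ #|A|.
Proof.
have -> : (1 + x) ^+ #|A| = \prod_(i : T) ((if i \in A then x else 0) + 1).
  rewrite -prodr_const big_mkcond /=; apply: eq_bigr => i _.
  by case: (i \in A); rewrite ?add0r // addrC.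
rewrite bigA_distr big_mkcond /=; apply: eq_bigr => S _.
rewrite -big_mkcond /=; case: (boolP (S \subset A)) => [/subsetP SA | /subsetPn[i Si Ai]].
  by rewrite -prodr_const; apply: eq_bigr => i /SA ->.
by rewrite (bigD1 i) //= (negbTE Ai) mul0r.
Qed.

Lemma independent_Kab (a b : nat) (S : {set 'I_a + 'I_b}) :
  independent (Kab_rel a b) S =
  (S \subset [set inl i | i : 'I_a]) || (S \subset [set inr i | i : 'I_b]).
Proof.
apply/forall_inP/idP => [indS | ].
  apply/negPn/negP; rewrite negb_or => /andP[/subsetPn[x Sx notL] /subsetPn[y Sy notR]].
  have /forall_inP/(_ y Sy) := indS x Sx.
  case: x Sx notL => [i|i] Sx notL; first by rewrite imset_f in notL.
  by case: y Sy notR => [j|j] Sy notR; last rewrite imset_f in notR.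
case/orP => /subsetP sub_S x Sx; apply/forall_inP => y Sy.
  by case/imsetP: (sub_S x Sx) => i _ ->; case/imsetP: (sub_S y Sy) => j _ ->.
by case/imsetP: (sub_S x Sx) => i _ ->; case/imsetP: (sub_S y Sy) => j _ ->.
Qed.

Lemma indep_poly_Kab (a b : nat) :
  indep_poly (Kab_rel a b) = (1 + 'X) ^+ a + (1 + 'X) ^+ b - 1.
Proof.
pose L : {set 'I_a + 'I_b} := [set inl i | i : 'I_a].
pose R : {set 'I_a + 'I_b} := [set inr i | i : 'I_b].
have cardL : #|L| = a by rewrite card_imset ?card_ord //; move=> i j [].
have cardR : #|R| = b by rewrite card_imset ?card_ord //; move=> i j [].
have LR_set0 (S : {set 'I_a + 'I_b}) : (S \subset L) && (S \subset R) = (S == set0).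
  apply/andP/eqP => [[/subsetP SL /subsetP SR] | ->]; last by rewrite !sub0set.
  apply/setP => x; rewrite inE; apply/negP => Sx.
  by case/imsetP: (SL x Sx) => i _ xi; case/imsetP: (SR x Sx) => j _; rewrite xi.
have sum_subsets_L : (1 + 'X) ^+ a = \sum_(S : {set _} | S \subset L) 'X^#|S| :> {poly algC}.
  by rewrite sum_subset_expr cardL.
have sum_subsets_R : (1 + 'X) ^+ b = \sum_(S : {set _} | S \subset R) 'X^#|S| :> {poly algC}.
  by rewrite sum_subset_expr cardR.
rewrite sum_subsets_L sum_subsets_R /indep_poly.
have -> : 1 = \sum_(S : {set _} | (S \subset L) && (S \subset R)) 'X^#|S| :> {poly algC}.
  by under eq_bigl do rewrite LR_set0; rewrite big_pred1_eq cards0.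
under eq_bigl do rewrite independent_Kab.
rewrite [LHS]big_mkcond [X in _ + X - _]big_mkcond [X in X + _ - _]big_mkcond [X in _ - X]big_mkcond.
rewrite -big_split -sumrB /=.
apply: eq_bigr => S _.
by case: (S \subset L); case: (S \subset R); rewrite /= ?addr0 ?subr0 ?add0r ?addrK ?subrr.
Qed.

Lemma rat_gt1_nat_multiples (l : rat) : 1 < l -> exists P Q : nat,
  [/\ (0 < Q)%N, (Q < P)%N & forall m k : nat, l * m%:R = k%:R ->
      exists t, m = (Q * t)%N /\ k = (P * t)%N].
Proof.
move=> l_gt1; have l_gt0 : 0 < l := lt_trans ltr01 l_gt1.
have den_gt0 : (0 < `|denq l|)%N by rewrite absz_gt0 denq_neq0.
exists `|numq l|%N, `|denq l|%N; split=> //.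
  rewrite -ltz_nat !abszE !gtr0_norm ?numq_gt0 // -(ltr_int rat) numqE.
  by rewrite ltr_pMl // ltr0z.
move=> m k lm.
have num_den : (`|numq l| * m = k * `|denq l|)%N.
  apply/eqP; rewrite -(eqr_nat rat) !natrM !natr_absz !gtr0_norm ?numq_gt0 //.
  by rewrite numqE mulrAC lm.
have den_dvd_m : (`|denq l| %| m)%N.
  by rewrite -(@Gauss_dvdr _ `|numq l|) 1?coprime_sym ?coprime_num_den ?num_den ?dvdn_mull.
exists (m %/ `|denq l|)%N; rewrite mulnC divnK //; split=> //.
by apply/eqP; rewrite -(eqn_pmul2r den_gt0) -num_den -mulnA divnK.
Qed.

Lemma prodr_ile1_eq1 (R : numDomainType) (I : eqType) (r : seq I) (F : I -> R) :
  (forall i, i \in r -> 0 <= F i <= 1) -> \prod_(i <- r) F i = 1 ->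
  forall i, i \in r -> F i = 1.
Proof.
elim: r => [|j r IHr] // F01; rewrite big_cons => prod_eq1 i.
have F01r i' : i' \in r -> 0 <= F i' <= 1.
  by move=> ri'; apply: F01; rewrite in_cons ri' orbT.
have /andP[Fj_ge0 Fj_le1] := F01 j (mem_head j r).
have prod_le1 : \prod_(i <- r) F i <= 1.
  by rewrite big_seq prodr_ile1.
have Fj_eq1 : F j = 1.
  apply/le_anti; rewrite Fj_le1 /= -{1}prod_eq1.
  by rewrite -[leRHS]mulr1 ler_wpM2l.
rewrite in_cons => /orP[/eqP -> // | ri]; apply: IHr F01r _ i ri.
by move: prod_eq1; rewrite Fj_eq1 mul1r.
Qed.

Lemma conj_prod_subr1_unit (rs : seq algC) :
  (forall z, z \in rs -> `|z| = 1) ->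
  (\prod_(z <- rs) (1 - z))^* = (\prod_(z <- rs) (- z))^* * \prod_(z <- rs) (1 - z).
Proof.
move=> unit_rs; rewrite !rmorph_prod -big_split /=; apply: eq_big_seq => z /unit_rs z1.
have zz : z^* * z = 1 by rewrite mulrC -normCK z1 expr1n.
by rewrite rmorphB rmorph1 rmorphN mulrBr mulr1 mulNr zz opprK addrC.
Qed.

Lemma trinomial_root_norm_gt1 (p q : nat) : (0 < q)%N -> (q < p)%N ->
  exists u : algC, u ^+ p + u ^+ q = 1 /\ 1 < `|u|.
Proof.
move=> q_gt0 lt_qp.
pose f : {poly algC} := 'X^p + 'X^q - 1.
have f_eval x : f.[x] = x ^+ p + x ^+ q - 1 by rewrite !hornerE.
have f_monic : f \is monic.
  rewrite /f -addrA monicE lead_coefDl ?lead_coefXn // size_polyXn.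
  by rewrite size_Xn_sub_1.
have [rs f_prod] : {rs | f = \prod_(z <- rs) ('X - z%:P)}.
  by have [rs] := closed_field_poly_normal f; rewrite (monicP f_monic) scale1r; exists rs.
have f_roots x : f.[x] = \prod_(z <- rs) (x - z).
  by rewrite f_prod horner_prod; apply: eq_bigr => z _; rewrite hornerXsubC.
have [/hasP[u rs_u u_gt1] | /hasPn rs_le1] := boolP (has (fun z => 1 < `|z|) rs).
  exists u; split=> //; apply/eqP; rewrite -subr_eq0 -f_eval f_roots.
  by rewrite (big_rem u) //= subrr mul0r.
have f0 : f.[0] = -1 by rewrite f_eval !expr0n !gtn_eqF ?(ltn_trans q_gt0 lt_qp) ?add0r.
have f1 : f.[1] = 1 by rewrite f_eval !expr1n addrK.
have unit_rs : forall z, z \in rs -> `|z| = 1.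
  apply: (prodr_ile1_eq1 (F := Num.norm)).
    by move=> z /rs_le1; rewrite normr_ge0 real_leNgt ?real1 ?normr_real.
  have norm_f0 : `|f.[0]| = 1 by rewrite f0 normrN1.
  rewrite -[RHS]norm_f0 f_roots normr_prod.
  by apply: eq_bigr => z _; rewrite sub0r normrN.
have prod_opp : \prod_(z <- rs) - z = -1.
  by rewrite -f0 f_roots; apply: eq_bigr => z _; rewrite sub0r.
have := conj_prod_subr1_unit unit_rs.
rewrite prod_opp -f_roots f1 mulr1 rmorphN1 rmorph1 => one_eqN1.
by have := ltrN10 algC; rewrite -one_eqN1 ltr10.
Qed.

Lemma sum_expr_unity_root (R : idomainType) (x : R) (t : nat) :
  x ^+ t = 1 -> x != 1 -> \sum_(j < t) x ^+ j = 0.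
Proof.
move=> xt1 x_neq1; apply/eqP; have /esym/eqP := subrX1 x t.
by rewrite xt1 subrr mulf_eq0 subr_eq0 (negbTE x_neq1).
Qed.

(* fejer n a is the coefficient of 'X^a in 'X * (\sum_(i < n) 'X^i)^2. *)
Definition fejer (n a : nat) : nat := minn a (n.*2 - a).

Lemma sum_sqr_ge (n : nat) : (n ^ 3 <= 3 * \sum_(a < n.+1) a ^ 2)%N.
Proof.
elim: n => [|n IHn] //; rewrite big_ord_recr /=.
by move: IHn; move: (\sum_(a < n.+1) _)%N => S; nia.
Qed.

Lemma fejer_sum_sqr_ge (n t : nat) : (n < t)%N ->
  (n ^ 3 <= 3 * \sum_(a < t) fejer n a ^ 2)%N.
Proof.
move=> lt_nt; apply: leq_trans (sum_sqr_ge n) _; rewrite leq_mul2l /=.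
rewrite (big_ord_widen t (fun a => a ^ 2)%N lt_nt) big_mkcond /=.
apply: leq_sum => a _; case: ifP => // a_le_n.
by have -> : fejer n a = a by rewrite /fejer; lia.
Qed.

Lemma fejer_sum_sqr_le (n t : nat) : (n.*2 < t)%N ->
  (2 * \sum_(a < t) fejer n a ^ 2 <= 2 * \sum_(a < t) fejer n a.-1 * fejer n a + t)%N.
Proof.
move=> lt_2n_t.
have sum_shift : (\sum_(a < t) fejer n a.-1 ^ 2 = \sum_(a < t) fejer n a ^ 2)%N.
  case: t lt_2n_t => [|t] // lt_2n_t; rewrite big_ord_recl big_ord_recr /=.
  have -> : fejer n t = 0%N by rewrite /fejer; lia.
  have -> : fejer n 0 = 0%N by rewrite /fejer; lia.
  by rewrite add0n addn0; under eq_bigr do rewrite add0n.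
rewrite mul2n -addnn -{1}sum_shift -big_split /=.
apply: leq_trans (_ : \sum_(a < t) (2 * (fejer n a.-1 * fejer n a) + 1) <= _)%N.
  apply: leq_sum => a _.
  have : (fejer n a <= fejer n a.-1 + 1 /\ fejer n a.-1 <= fejer n a + 1)%N.
    by rewrite /fejer; lia.
  by move: (fejer n a) (fejer n a.-1) => x y; nia.
by rewrite big_split /= -big_distrr sum_nat_const card_ord muln1.
Qed.

Definition fejer_poly (n : nat) : {poly algC} := \poly_(a < n.*2) (fejer n a)%:R.

Lemma coef_fejer_poly (n a : nat) : (fejer_poly n)`_a = (fejer n a)%:R.
Proof.
rewrite coef_poly; case: ltnP => // le_2n_a.
by have -> : fejer n a = 0%N by rewrite /fejer; lia.
Qed.

Lemma coef_fejer_polyMX (n a : nat) : (fejer_poly n * 'X)`_a = (fejer n a.-1)%:R.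
Proof. by rewrite coefMX coef_fejer_poly; case: a => [|a] //; rewrite /fejer min0n. Qed.

Lemma sub1rX_le (R : numDomainType) (s : R) (n : nat) : 0 <= s <= 1 ->
  1 - s ^+ n <= n%:R * (1 - s).
Proof.
case/andP => s_ge0 s_le1.
rewrite -opprB subrX1 -mulNr opprB mulrC ler_wpM2r ?subr_ge0 //.
have -> : n%:R = \sum_(i < n) (1 : R) by rewrite sumr_const card_ord.
by apply: ler_sum => i _; rewrite exprn_ile1.
Qed.

Section RegularPolygon.

Variables (t : nat) (z v0 : algC).
Hypotheses (z_prim : t.-primitive_root z) (v0_unit : `|v0| = 1).

Let vertex (j : nat) := v0 * z ^+ j.

Lemma norm_prim_root : `|z| = 1.
Proof.
apply/eqP; rewrite -(pexpr_eq1 (prim_order_gt0 z_prim)) ?normr_ge0 //.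
by rewrite -normrX prim_expr_order ?normr1.
Qed.

Lemma norm_vertex j : `|vertex j| = 1.
Proof. by rewrite normrM normrX norm_prim_root v0_unit expr1n mulr1. Qed.

Lemma sum_vertex_expr_conj (a b : nat) : (a < t)%N -> (b < t)%N ->
  \sum_(j < t) vertex j ^+ a * (vertex j)^* ^+ b = (a == b)%:R * t%:R.
Proof.
move=> a_lt b_lt.
have vertex_neq0 j : vertex j != 0 by rewrite -normr_eq0 norm_vertex oner_eq0.
have conj_vertex j : (vertex j)^* = (vertex j)^-1.
  by rewrite invC_norm norm_vertex expr1n invr1 mul1r.
under eq_bigr do rewrite conj_vertex exprVn.
have [<- | neq_ab] := eqVneq a b.
  under eq_bigr do rewrite mulfV ?expf_neq0 //.
  by rewrite sumr_const card_ord mul1r.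
pose x := z ^+ a / z ^+ b.
have z_neq0 : z != 0 by rewrite -normr_eq0 norm_prim_root oner_eq0.
transitivity (\sum_(j < t) v0 ^+ a / v0 ^+ b * x ^+ j).
  by apply: eq_bigr => j _; rewrite /vertex /x !exprMn exprVn invfM mulrACA !(exprAC z j).
rewrite mul0r -mulr_sumr sum_expr_unity_root ?mulr0 //.
  by rewrite /x exprMn exprVn !(exprAC z _ t) (prim_expr_order z_prim) !expr1n invr1 mulr1.
apply: contra_neq neq_ab => /divr1_eq /eqP.
by rewrite (eq_prim_root_expr z_prim) !modn_small // => /eqP.
Qed.

Lemma parseval_vertex (p q : {poly algC}) : (size p <= t)%N -> (size q <= t)%N ->
  \sum_(j < t) p.[vertex j] * (q.[vertex j])^* = t%:R * \sum_(a < t) p`_a * (q`_a)^*.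
Proof.
move=> size_p size_q.
under eq_bigr do rewrite (horner_coef_wide _ size_p) (horner_coef_wide _ size_q)
  rmorph_sum mulr_suml.
rewrite exchange_big mulr_sumr; apply: eq_bigr => a _.
under eq_bigr do rewrite mulr_sumr.
rewrite exchange_big /=.
transitivity (\sum_(b < t) p`_a * (q`_b)^* * ((a == b :> nat)%:R * t%:R)).
  apply: eq_bigr => b _; rewrite -sum_vertex_expr_conj // mulr_sumr.
  by apply: eq_bigr => j _; rewrite rmorphM rmorphXn /=; ring.
rewrite (bigD1 a) //= eqxx mul1r mulrC big1 ?addr0 // => b.
by rewrite eq_sym val_eqE => /negbTE ->; rewrite mul0r mulr0.
Qed.

Lemma fejer_Re_vertex_le (n : nat) (s : algC) : (n.*2 < t)%N -> s <= 1 ->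
  (forall j : 'I_t, 'Re (vertex j) <= s) ->
  2 * (1 - s) * (n ^ 3)%:R <= (3 * t)%:R.
Proof.
move=> lt_2n_t s_le1 Re_le.
pose F := fejer_poly n.
pose S := (\sum_(a < t) fejer n a ^ 2)%N.
pose T := (\sum_(a < t) fejer n a.-1 * fejer n a)%N.
have size_F : (size F < t)%N by apply: leq_ltn_trans (size_poly _ _) lt_2n_t.
have size_FX : (size (F * 'X)%R <= t)%N.
  by apply: leq_trans (size_polyMleq _ _) _; rewrite size_polyX addn2.
have sum_F : \sum_(j < t) `|F.[vertex j]| ^+ 2 = t%:R * S%:R.
  under eq_bigr do rewrite normCK.
  rewrite (parseval_vertex (ltnW size_F) (ltnW size_F)) /S natr_sum.
  congr (_ * _); apply: eq_bigr => a _.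
  by rewrite coef_fejer_poly conjC_nat -natrM mulnn.
have sum_FX : \sum_(j < t) vertex j * `|F.[vertex j]| ^+ 2 = t%:R * T%:R.
  under eq_bigr do rewrite normCK mulrA [vertex _ * _]mulrC -hornerMX.
  rewrite (parseval_vertex size_FX (ltnW size_F)) /T natr_sum.
  congr (_ * _); apply: eq_bigr => a _.
  by rewrite coef_fejer_polyMX coef_fejer_poly conjC_nat -natrM.
have T_le : T%:R <= s * S%:R.
  have t_gt0 : 0 < t%:R :> algC by rewrite ltr0n; lia.
  rewrite -(ler_pM2l t_gt0) mulrCA -sum_F mulr_sumr.
  have ReT : 'Re (t%:R * T%:R : algC) = t%:R * T%:R.
    by apply/Creal_ReP; rewrite rpredM ?rpred_nat.
  rewrite -ReT -sum_FX raddf_sum; apply: ler_sum => j _.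
  change ('Re (vertex j * `|F.[vertex j]| ^+ 2) <= s * `|F.[vertex j]| ^+ 2).
  by rewrite ReMr ?rpredX ?normr_real // ler_wpM2r ?exprn_ge0 ?normr_ge0.
have S_ge : (n ^ 3)%:R <= 3 * S%:R :> algC.
  by rewrite -natrM ler_nat fejer_sum_sqr_ge //; lia.
have S_le : 2 * S%:R <= 2 * T%:R + t%:R :> algC.
  by rewrite -!natrM -natrD ler_nat fejer_sum_sqr_le.
apply: le_trans (_ : 2 * (1 - s) * (3 * S%:R) <= _).
  by rewrite ler_wpM2l // mulr_ge0 ?ler0n ?subr_ge0.
apply: le_trans (_ : 3 * (2 * S%:R - 2 * T%:R) <= _).
  rewrite (_ : _ * (3 * _) = 3 * (2 * S%:R - 2 * (s * S%:R))); last by ring.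
  by rewrite ler_wpM2l ?ler0n // lerB // ler_wpM2l ?ler0n.
by rewrite natrM ler_wpM2l ?ler0n // lerBlDr addrC.
Qed.

End RegularPolygon.

Lemma nth_root_Re_gt1 (u : algC) : 1 < `|u| ->
  exists T0 : nat, forall t : nat, (T0 < t)%N -> exists w : algC, w ^+ t = u /\ 1 < 'Re w.
Proof.
move=> u_gt1; have u_gt0 : 0 < `|u| := lt_trans ltr01 u_gt1.
pose b := 1 - `|u|^-1.
have b_gt0 : 0 < b by rewrite subr_gt0 invf_lt1.
(* 2 (1 - s) n^3 <= 3 t, b <= t (1 - s) and t <= 4 n force b n <= 24. *)
pose K := Num.Def.archi_bound (24 / b).
have K_gt : 24 / b < K%:R by rewrite archi_boundP // divr_ge0 // ltW.
exists K.*2.+2 => t lt_Kt; have t_gt0 : (0 < t)%N by lia.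
have [z z_prim] := C_prim_root_exists t_gt0.
pose v0 := t.-root (u / `|u|).
pose s := t.-root `|u|^-1.
have v0_unit : `|v0| = 1.
  by rewrite norm_rootC normf_div normr_id divff ?rootC1 // gt_eqF.
have s_gt0 : 0 < s by rewrite rootC_gt0 // invr_gt0.
have s_le1 : s <= 1 by rewrite rootC_le1 ?invf_le1 ?invr_ge0 ?ltW.
have [/existsP[j Re_gt1] | /existsPn Re_le1] :=
  boolP [exists j : 'I_t, 1 < 'Re (v0 * z ^+ j / s)].
  exists (v0 * z ^+ j / s); split=> //.
  rewrite /v0 /s exprMn exprVn !(rootCK t_gt0) invrK exprMn.
  rewrite (rootCK t_gt0) exprAC (prim_expr_order z_prim) expr1n mulr1.
  by rewrite divfK ?lt0r_neq0.
exfalso.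
have Re_le (j : 'I_t) : 'Re (v0 * z ^+ j) <= s.
  have := Re_le1 j; rewrite -real_leNgt ?Creal_Re ?real1 //.
  by rewrite ReMr ?rpredV ?gtr0_real // ler_pdivrMr // mul1r.
pose n := t.-1./2.
have n_gt_K : (K < n)%N by rewrite /n; lia.
have lt_2n_t : (n.*2 < t)%N by rewrite /n; lia.
have key := fejer_Re_vertex_le z_prim v0_unit lt_2n_t s_le1 Re_le.
have b_le : b <= t%:R * (1 - s).
  have s01 : 0 <= s <= 1 by rewrite s_le1 ltW.
  by have := sub1rX_le t s01; rewrite /s (rootCK t_gt0).
have bn_gt : 24 < b * n%:R.
  rewrite -ltr_pdivrMl // mulrC; apply: lt_le_trans K_gt _.
  by rewrite ler_nat ltnW.
have : b * n%:R * (2 * (n ^ 2)%:R) <= 24 * (2 * (n ^ 2)%:R).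
  have -> : 24 * (2 * (n ^ 2)%:R) = (48 * n ^ 2)%:R :> algC by rewrite mulrA -!natrM.
  have -> : b * n%:R * (2 * (n ^ 2)%:R) = 2 * b * (n ^ 3)%:R by rewrite !natrX; ring.
  apply: le_trans (_ : t%:R * (2 * (1 - s) * (n ^ 3)%:R) <= _).
    rewrite [leRHS](_ : _ = 2 * (t%:R * (1 - s)) * (n ^ 3)%:R); last by ring.
    by rewrite ler_wpM2r ?ler0n // ler_wpM2l ?ler0n.
  apply: le_trans (ler_wpM2l (ler0n _ t) key) _.
  by rewrite -natrM ler_nat /n; nia.
rewrite ler_pM2r ?mulr_gt0 ?ltr0n ?expn_gt0 ?(leq_ltn_trans (leq0n K) n_gt_K) //.
by move/(lt_le_trans bn_gt); rewrite ltxx.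
Qed.

Theorem theorem4 :
  forall l : rat, 1 < l ->
  exists N : nat, forall m k : nat, (N < m)%N ->
    l * m%:R = k%:R ->
    ~ stable (Kab_rel m k).
Proof.
move=> l l_gt1.
have [P [Q [Q_gt0 lt_QP scale]]] := rat_gt1_nat_multiples l_gt1.
have [u [u_root u_gt1]] := trinomial_root_norm_gt1 Q_gt0 lt_QP.
have [T0 large_roots] := nth_root_Re_gt1 u_gt1.
exists (Q * T0)%N => m k lt_QT0_m /scale[t [m_eq ->]] stable_Kab.
have lt_T0_t : (T0 < t)%N by rewrite -(ltn_pmul2l Q_gt0) -m_eq.
have [w [w_t Re_w_gt1]] := large_roots t lt_T0_t.
have : root (indep_poly (Kab_rel m (P * t))) (w - 1).
  rewrite /root indep_poly_Kab !(hornerD, hornerN, horner_exp) hornerX -polyC1 hornerC subrKC m_eq.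
  by rewrite ![(_ * t)%N]mulnC !exprM w_t [u ^+ Q + _]addrC u_root subrr.
move=> /stable_Kab; rewrite raddfB /= (Creal_ReP 1 _) ?real1 // subr_le0.
by move/(lt_le_trans Re_w_gt1); rewrite ltxx.
Qed.
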